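(* Let $M'\subset\bigoplus_{i=1}^rS[-\delta_i]$ be a graded $S$-submodule which is generated by $\bigoplus_{d\ge0}M'(d)_d$, where $M'(d)=M'\cap\bigoplus_iS(\delta_i,d)[-\delta_i]$. Then there exists a unique graded right $A$-submodule $M\subset\bigoplus_iA[-\delta_i]$ such that $M'=L(M)$.
   Context: Let $\mathbb K$ be a field, $F=\mathbb K\langle x_1,\dots,x_n\rangle$ with standard grading, $I\subset F$ a graded two-sided ideal, $A=F/I$, $A[-\delta]_d=A_{d-\delta}$, $\bigoplus_{i=1}^rA[-\delta_i]$ the graded free right $A$-module with basis $e_i$ of degree $\delta_i$. Let $P=\mathbb K[x_{ij}\mid1\le i\le n,j\ge1]$ (commutative, $\deg x_{ij}=1$), $Q$ the ideal generated by all $x_{ij}x_{kj}$, $R=P/Q$, $\sigma:x_{ij}\mapsto x_{i,j+1}$, $\iota:F\to R$ the $\mathbb K$-linear map $x_{i_1}\cdots x_{i_d}\mapsto x_{i_11}\cdots x_{i_dd}$, $J$ the ideal of $R$ generated by $\bigcup_{k\ge0}\sigma^k(\iota(I))$, $S=R/J$ (with induced $\sigma$ and induced injective graded linear $\iota:A\to S$). $S(\delta,d)$ is the subalgebra of $S$ generated by the cosets of $x_{ij}$ with $\delta<j\le d$; $\bigoplus_iS(\delta_i,d)[-\delta_i]$ means the elements $\sum_ie'_ih_i$ with $h_i\in S(\delta_i,d)$. $\bigoplus_iS[-\delta_i]$ is the graded free $S$-module with basis $e'_i$ of degree $\delta_i$, and $\iota:\bigoplus_iA[-\delta_i]\to\bigoplus_iS[-\delta_i]$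 is $e_if\mapsto e'_i\sigma^{\delta_i}(\iota(f))$. $L(M)$ is the $S$-submodule generated by $\iota(M)$. *)

(* Everything is encoded by coefficient functions on monomial
   bases; quotient modules are represented by their preimages (lifts). *)
From HB Require Import structures.
From mathcomp Require Import all_boot all_order all_algebra.
Set Implicit Arguments. Unset Strict Implicit. Unset Printing Implicit Defensive.
Import GRing.Theory.
Local Open Scope ring_scope.

Definition fsupp (K : fieldType) (T : eqType) (f : T -> K) : Prop :=
  exists s : seq T, forall t, f t != 0 -> t \in s.

Definition lin_closed (K : fieldType) (T O : Type)
    (op : O -> (T -> K) -> (T -> K)) (S : (T -> K) -> Prop) : Prop :=
  [/\ S (fun _ => 0),
      (forall x y, S x -> S y -> S (fun t => x t + y t)),
      (forall (c : K) x, S x -> S (fun t => c * x t)) &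
      (forall o x, S x -> S (op o x))].

Definition gen_span (K : fieldType) (T O : Type)
    (op : O -> (T -> K) -> (T -> K)) (G : (T -> K) -> Prop) (x : T -> K) : Prop :=
  forall S, lin_closed op S -> (forall g, G g -> S g) -> S x.

Definition hcomp (K : fieldType) (T : Type) (deg : T -> nat) (d : nat)
    (x : T -> K) : T -> K :=
  fun t => if deg t == d then x t else 0.

Definition graded (K : fieldType) (T : Type) (deg : T -> nat)
    (S : (T -> K) -> Prop) : Prop :=
  forall x d, S x -> S (hcomp deg d x).

Definition compo (K : fieldType) (A B : Type) (x : A * B -> K) (i : A) : B -> K :=
  fun b => x (i, b).

(* ---------- the free algebra F = K<x_1..x_n> (basis: words) ---------- *)

Definition word (n : nat) := seq 'I_n.

Definition lmulF (K : fieldType) (n : nat) (i : 'I_n) (f : word n -> K) : word n -> K :=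
  fun w => if w is a :: w' then (if a == i then f w' else 0) else 0.

Definition rmulF (K : fieldType) (n : nat) (i : 'I_n) (f : word n -> K) : word n -> K :=
  fun w => if rev w is a :: w' then (if a == i then f (rev w') else 0) else 0.

Definition opF (K : fieldType) (n : nat) (o : bool * 'I_n) : (word n -> K) -> word n -> K :=
  if o.1 then lmulF o.2 else rmulF o.2.

Definition two_sided_ideal (K : fieldType) (n : nat) (I : (word n -> K) -> Prop) : Prop :=
  lin_closed (@opF K n) I.

(* free right F-module  (+)_i F[-delta_i]  (basis: pairs (i, w) = e_i w) *)
Definition rmulFr (K : fieldType) (n r : nat) (a : 'I_n)
    (x : 'I_r * word n -> K) : 'I_r * word n -> K :=
  fun p => if rev p.2 is b :: w' then (if b == a then x (p.1, rev w') else 0) else 0.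

Definition degFr (n r : nat) (delta : 'I_r -> nat) (p : 'I_r * word n) : nat :=
  (delta p.1 + size p.2)%N.

(* lift (preimage in (+)_i F[-delta_i]) of a graded right A-submodule of
   (+)_i A[-delta_i], A = F/I *)
Definition lifted_graded_right_submodule (K : fieldType) (n r : nat)
    (delta : 'I_r -> nat) (I : (word n -> K) -> Prop)
    (N : ('I_r * word n -> K) -> Prop) : Prop :=
  [/\ lin_closed (@rmulFr K n r) N,
      (forall x, N x -> fsupp x),
      (forall x, (forall i, I (compo x i)) -> N x) &
      graded (degFr delta) N].

(* ---------- P = K[x_ij] (commutative); variable (i, j) stands for x_{i,j+1} ---------- *)

Definition var (n : nat) := ('I_n * nat)%type.

(* total order used to store commutative monomials as sorted lists *)
Definition leV (n : nat) : rel (var n) :=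
  fun a b => (a.2 < b.2)%N || ((a.2 == b.2) && (a.1 <= b.1)%N).

Definition mon (n : nat) := seq (var n).

Definition mulP (K : fieldType) (n : nat) (v : var n) (f : mon n -> K) : mon n -> K :=
  fun m => if (v \in m) && sorted (@leV n) m then f (rem v m) else 0.

Definition monoP (K : fieldType) (n : nat) (m0 : mon n) : mon n -> K :=
  fun m => if m == m0 then 1 else 0.

Definition Qgen (K : fieldType) (n : nat) (g : mon n -> K) : Prop :=
  exists (i k : 'I_n) (j : nat), g = monoP K (sort (@leV n) [:: (i, j); (k, j)]).

(* iota : F -> P,  x_{i_1}...x_{i_d} |-> x_{i_1,1}...x_{i_d,d} *)
Definition iotaP (K : fieldType) (n : nat) (f : word n -> K) : mon n -> K :=
  fun m => if unzip2 m == iota 0 (size m) then f (unzip1 m) else 0.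

(* sigma : x_{ij} |-> x_{i,j+1} *)
Definition sigmaP (K : fieldType) (n : nat) (f : mon n -> K) : mon n -> K :=
  fun m => if all (fun v : var n => (0 < v.2)%N) m
           then f [seq (v.1, v.2.-1) | v <- m] else 0.

(* preimage in P of J (kernel of P -> S = R/J, R = P/Q) *)
Definition Jgen (K : fieldType) (n : nat) (I : (word n -> K) -> Prop) (g : mon n -> K) : Prop :=
  Qgen g \/ exists (k : nat) (f : word n -> K), I f /\ g = iter k (@sigmaP K n) (iotaP f).

Definition Jt (K : fieldType) (n : nat) (I : (word n -> K) -> Prop) : (mon n -> K) -> Prop :=
  gen_span (@mulP K n) (Jgen I).

(* free P-module (+)_i P[-delta_i]  (basis: pairs (i, m) = e'_i m) *)
Definition mulPr (K : fieldType) (n r : nat) (v : var n)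
    (x : 'I_r * mon n -> K) : 'I_r * mon n -> K :=
  fun p => if (v \in p.2) && sorted (@leV n) p.2 then x (p.1, rem v p.2) else 0.

Definition degPr (n r : nat) (delta : 'I_r -> nat) (p : 'I_r * mon n) : nat :=
  (delta p.1 + size p.2)%N.

Definition polyPr (K : fieldType) (n r : nat) (x : 'I_r * mon n -> K) : Prop :=
  fsupp x /\ forall p, x p != 0 -> sorted (@leV n) p.2.

(* x lies in the kernel of (+)_i P[-delta_i] -> (+)_i S[-delta_i] *)
Definition kerPr (K : fieldType) (n r : nat) (I : (word n -> K) -> Prop)
    (x : 'I_r * mon n -> K) : Prop :=
  forall i, Jt I (compo x i).

(* lift of a graded S-submodule of (+)_i S[-delta_i] *)
Definition lifted_graded_S_submodule (K : fieldType) (n r : nat)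
    (delta : 'I_r -> nat) (I : (word n -> K) -> Prop)
    (N : ('I_r * mon n -> K) -> Prop) : Prop :=
  [/\ lin_closed (@mulPr K n r) N,
      (forall x, N x -> polyPr x),
      (forall x, kerPr I x -> N x) &
      graded (degPr delta) N].

(* y is a (lift of an) element of (+)_i S(delta_i, d)[-delta_i]:
   component i only involves x_{kj} with delta_i < j <= d *)
Definition in_subalg_r (K : fieldType) (n r : nat) (delta : 'I_r -> nat) (d : nat)
    (y : 'I_r * mon n -> K) : Prop :=
  forall p, y p != 0 -> all (fun v : var n => (delta p.1 <= v.2 < d)%N) p.2.

(* x is a lift of an element of M'(d)_d *)
Definition Mgen (K : fieldType) (n r : nat) (delta : 'I_r -> nat)
    (I : (word n -> K) -> Prop) (N : ('I_r * mon n -> K) -> Prop) (d : nat)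
    (x : 'I_r * mon n -> K) : Prop :=
  [/\ N x,
      (exists y, [/\ polyPr y, in_subalg_r delta d y & kerPr I (fun p => x p - y p)]) &
      kerPr I (fun p => x p - hcomp (degPr delta) d x p)].

(* iota : (+)_i A[-delta_i] -> (+)_i S[-delta_i],  e_i f |-> e'_i sigma^{delta_i}(iota f) *)
Definition iotaR (K : fieldType) (n r : nat) (delta : 'I_r -> nat)
    (x : 'I_r * word n -> K) : 'I_r * mon n -> K :=
  fun p => iter (delta p.1) (@sigmaP K n) (iotaP (compo x p.1)) p.2.

(* lift of L(M) *)
Definition Lspan (K : fieldType) (n r : nat) (delta : 'I_r -> nat)
    (I : (word n -> K) -> Prop) (N : ('I_r * word n -> K) -> Prop) :
    ('I_r * mon n -> K) -> Prop :=
  gen_span (@mulPr K n r) (fun g => kerPr I g \/ exists x, N x /\ g = iotaR delta x).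

From HB Require Import structures.
From mathcomp Require Import all_boot all_order all_algebra.
From mathcomp Require Import zify ring.
From Stdlib Require Import FunctionalExtensionality Classical IndefiniteDescription.
Set Implicit Arguments. Unset Strict Implicit. Unset Printing Implicit Defensive.
Import GRing.Theory.

(* Take for M the elements x all of whose homogeneous components x_d satisfy
   iota(x_d) in M'.  It is a graded right submodule and L(M) is contained in M'.
   Conversely, modulo J a generator of M'(d)_d is a combination of monomials of
   degree d in the variables x_{kj}, delta_i < j <= d; such a monomial either
   occupies each of these columns once (a "window", the image under iota of a
   word) or has two variables in one column and lies in Q.  Hence M' = L(M).
   For uniqueness, restrict elements of L(N) to window monomials: the product of
   a monomial with sigma^k(iota f), f in I, restricts to a two-sided multiple of a
   homogeneous component of f, and its product with iota(x), x in N, to a right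
   multiple of x.  So the window part of L(N) lies in N, and since the window part
   of iota(x_d) is x_d, N = M. *)

Section Subspaces.
Variables (K : fieldType) (T : Type).

(* With no operators, [lin_closed] says "is a K-subspace". *)
Definition no_op (e : Empty_set) (x : T -> K) : T -> K := match e with end.

Definition subspace (S : (T -> K) -> Prop) := lin_closed no_op S.

Lemma subspace_lin_closed (O : Type) (op : O -> (T -> K) -> T -> K) S :
  lin_closed op S -> subspace S.
Proof. by case=> S0 SD SZ _; split. Qed.

Lemma subspace_forall (A : Type) (S : A -> (T -> K) -> Prop) :
  (forall a, subspace (S a)) -> subspace (fun x => forall a, S a x).
Proof.
move=> HS; split=> [a|x y Hx Hy a|c x Hx a|[]]; have [S0 SD SZ _] := HS a.
- exact: S0.
- exact: SD.
- exact: SZ.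
Qed.

(* Pull back along [f], then cut off outside [c]: [hcomp], [compo], [mulP] and
   [iotaR] all have this shape. *)
Definition masked (T' : Type) (c : T' -> bool) (f : T' -> T) (x : T -> K) : T' -> K :=
  fun t => if c t then x (f t) else 0%R.

Lemma masked0 T' c (f : T' -> T) : masked c f (fun _ => 0%R) = (fun _ => 0%R).
Proof. by apply: functional_extensionality => t; rewrite /masked; case: ifP. Qed.

Lemma maskedD T' c (f : T' -> T) x y :
  masked c f (fun t => x t + y t)%R = (fun t => masked c f x t + masked c f y t)%R.
Proof. by apply: functional_extensionality => t; rewrite /masked; case: ifP; rewrite ?addr0. Qed.

Lemma maskedZ T' c (f : T' -> T) a x :
  masked c f (fun t => a * x t)%R = (fun t => a * masked c f x t)%R.
Proof. by apply: functional_extensionality => t; rewrite /masked; case: ifP; rewrite ?mulr0. Qed.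

Section Span.
Variables (O : Type) (op : O -> (T -> K) -> T -> K).

Lemma gen_span_lin_closed G : lin_closed op (gen_span op G).
Proof.
split=> [S []//|x y Hx Hy S HS HG|c x Hx S HS HG|o x Hx S HS HG]; have [_ SD SZ SO] := HS.
- exact: SD (Hx S HS HG) (Hy S HS HG).
- exact: SZ (Hx S HS HG).
- exact: SO (Hx S HS HG).
Qed.

Lemma gen_span_of (G : (T -> K) -> Prop) g : G g -> gen_span op G g.
Proof. by move=> Hg S _; apply. Qed.

Lemma gen_span_sub (G G' : (T -> K) -> Prop) x :
  (forall g, G g -> gen_span op G' g) -> gen_span op G x -> gen_span op G' x.
Proof. by move=> HG Hx; apply: Hx => //; exact: gen_span_lin_closed. Qed.

End Span.

Section SpanChains.
Variables (O : Type) (op : O -> (T -> K) -> T -> K).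

Definition chainop (os : seq O) (g : T -> K) := foldr op g os.

Hypothesis op0 : forall o, op o (fun _ => 0%R) = (fun _ => 0%R).
Hypothesis opD : forall o x y, op o (fun t => x t + y t)%R = (fun t => op o x t + op o y t)%R.
Hypothesis opZ : forall o c x, op o (fun t => c * x t)%R = (fun t => c * op o x t)%R.

(* Since the operators are linear, a span closed under them is already spanned
   by the images of the generators under finite chains of operators. *)
Lemma gen_span_chains G x : gen_span op G x ->
  gen_span no_op (fun y => exists os g, G g /\ y = chainop os g) x.
Proof.
set C := fun y => _.
have [C0 CD CZ _] := gen_span_lin_closed no_op C.
apply; last by move=> g Hg; apply: gen_span_of; exists [::], g.
split=> // o y Hy.
apply: (Hy (fun y => gen_span no_op C (op o y))); last first.
  by move=> g [os [g0 [HG ->]]]; apply: gen_span_of; exists (o :: os), g0.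
split=> [|a b|c a|[]]; rewrite ?op0 ?opD ?opZ //; [exact: CD | exact: CZ].
Qed.

Lemma gen_span_chain_ind G (P : (T -> K) -> Prop) x : subspace P ->
  (forall os g, G g -> P (chainop os g)) -> gen_span op G x -> P x.
Proof.
move=> HP HG /gen_span_chains; apply=> // y [os [g [Hg ->]]]; exact: HG.
Qed.

End SpanChains.
End Subspaces.

Lemma subspace_masked (K : fieldType) (T T' : Type) c (f : T' -> T) (S : (T' -> K) -> Prop) :
  subspace S -> subspace (fun x => S (masked c f x)).
Proof.
case=> S0 SD SZ _; split=> [|x y Hx Hy|a x Hx|[]].
- by rewrite masked0.
- by rewrite maskedD; apply: SD.
- by rewrite maskedZ; apply: SZ.
Qed.

Section Supports.
Variables (K : fieldType) (T : eqType).

Lemma subspace_fsupp : subspace (@fsupp K T).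
Proof.
split=> [|x y [s Hs] [s' Hs']|c x [s Hs]|[]].
- by exists [::] => t; rewrite eqxx.
- exists (s ++ s') => t H; rewrite mem_cat.
  case: (x t =P 0%R) => [E|/eqP /Hs -> //]; rewrite E add0r in H; by rewrite (Hs' _ H) orbT.
- by exists s => t H; apply: Hs; apply: contraNneq H => ->; rewrite mulr0.
Qed.

Lemma hcomp0 (deg : T -> nat) d : hcomp deg d (fun _ => 0%R : K) = (fun _ => 0%R).
Proof. exact: (@masked0 K T T (fun t => deg t == d) id). Qed.

Lemma hcompD (deg : T -> nat) d (x y : T -> K) :
  hcomp deg d (fun t => x t + y t)%R = (fun t => hcomp deg d x t + hcomp deg d y t)%R.
Proof. exact: maskedD. Qed.

Lemma hcompZ (deg : T -> nat) d c (x : T -> K) :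
  hcomp deg d (fun t => c * x t)%R = (fun t => c * hcomp deg d x t)%R.
Proof. exact: maskedZ. Qed.

Lemma fsupp_hcomp (deg : T -> nat) d (x : T -> K) : fsupp x -> fsupp (hcomp deg d x).
Proof. by move=> [s Hs]; exists s => t; rewrite /hcomp; case: ifP => _; [exact: Hs|rewrite eqxx]. Qed.

Lemma hcomp_hcomp (deg : T -> nat) d e (x : T -> K) :
  hcomp deg d (hcomp deg e x) = if d == e then hcomp deg e x else (fun _ => 0%R).
Proof.
apply: functional_extensionality => t; rewrite /hcomp.
case: (d =P e) => [->|Hne]; first by case: (deg t == e).
by case: (deg t =P d) => // Ed; case: (deg t =P e) => // Ee; case: Hne; rewrite -Ed -Ee.
Qed.

Variables (S : (T -> K) -> Prop) (HS : subspace S).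

Lemma subspace_of_monomials x : fsupp x ->
  (forall t, x t != 0%R -> S (fun u => if u == t then 1%R else 0%R)) -> S x.
Proof.
have [S0 SD SZ _] := HS; move=> [s Hs]; elim: s x Hs => [|p s IH] x Hs Hm.
  have -> : x = (fun _ => 0%R); last exact: S0.
  by apply: functional_extensionality => t; apply/eqP; apply: contraT => /Hs.
pose x' := fun t => if t == p then 0%R else x t.
have -> : x = (fun t => x' t + x p * (if t == p then 1 else 0))%R.
  apply: functional_extensionality => t; rewrite /x'.
  by case: (t =P p) => [->|_]; rewrite ?mulr1 ?add0r ?mulr0 ?addr0.
apply: SD.
  apply: IH => t; rewrite /x'; case: (t =P p) => [_|Hne]; rewrite ?eqxx // => Ht.
    by move: (Hs _ Ht); rewrite inE => /orP [/eqP|].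
  exact: Hm.
case: (x p =P 0%R) => [->|/eqP Hp]; last exact: SZ (Hm _ Hp).
have -> : (fun t : T => 0 * (if t == p then 1 else 0))%R = (fun _ : T => 0 : K)%R => //.
by apply: functional_extensionality => t; rewrite mul0r.
Qed.

Lemma subspace_of_hcomps (deg : T -> nat) x : fsupp x -> (forall d, S (hcomp deg d x)) -> S x.
Proof.
have [S0 SD SZ _] := HS; move=> [s Hs]; elim: s x Hs => [|p s IH] x Hs Hm.
  have -> : x = (fun _ => 0%R); last exact: S0.
  by apply: functional_extensionality => t; apply/eqP; apply: contraT => /Hs.
pose x' := fun t => if deg t == deg p then 0%R else x t.
have -> : x = (fun t => x' t + hcomp deg (deg p) x t)%R.
  apply: functional_extensionality => t; rewrite /x' /hcomp.
  by case: (deg t == deg p); rewrite ?add0r ?addr0.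
apply: SD; last exact: Hm.
apply: IH => [t|d].
  rewrite /x'; case: (deg t =P deg p) => [_|Hne]; first by rewrite eqxx.
  move=> /Hs; rewrite inE => /orP [/eqP Ht|//]; by rewrite Ht in Hne.
case: (d =P deg p) => [->|Hne].
  have -> : hcomp deg (deg p) x' = (fun _ => 0%R); last exact: S0.
  by apply: functional_extensionality => t; rewrite /hcomp /x'; case: (deg t == deg p).
have -> : hcomp deg d x' = hcomp deg d x; last exact: Hm.
apply: functional_extensionality => t; rewrite /hcomp /x'.
case: (deg t =P d) => [Ht|//]; case: (deg t =P deg p) => [Ht2|//].
by rewrite -Ht Ht2 in Hne.
Qed.

End Supports.

Section Monomials.
Variables (K : fieldType) (n : nat).
Local Notation var := (var n).
Local Notation mon := (mon n).

Lemma leV_trans : transitive (@leV n).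
Proof.
move=> b a c; rewrite /leV => /orP [H1|/andP [/eqP H1 H2]] /orP [H3|/andP [/eqP H3 H4]].
- by rewrite (ltn_trans H1 H3).
- by rewrite -H3 H1.
- by rewrite H1 H3.
- by rewrite H1 H3 eqxx (leq_trans H2 H4) orbT.
Qed.

Lemma leV_anti : antisymmetric (@leV n).
Proof.
move=> [a1 a2] [b1 b2]; rewrite /leV /=.
move=> /andP [/orP [H1|/andP [/eqP H1 H2]] /orP [H3|/andP [/eqP H3 H4]]].
- by move: (ltn_trans H1 H3); rewrite ltnn.
- by move: H1; rewrite H3 ltnn.
- by move: H3; rewrite H1 ltnn.
- have E : a1 = b1 by apply: val_inj; apply/eqP; rewrite eqn_leq H2 H4.
  by rewrite E H1.
Qed.

Lemma leV_total : total (@leV n).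
Proof. move=> [a1 a2] [b1 b2]; rewrite /leV /=; case: (ltngtP a2 b2) => //= _; exact: leq_total. Qed.

Lemma mulP_chain_ind G (P : (mon -> K) -> Prop) x : subspace P ->
  (forall vs g, G g -> P (chainop (@mulP K n) vs g)) -> gen_span (@mulP K n) G x -> P x.
Proof.
apply: gen_span_chain_ind => *; apply: functional_extensionality => m.
all: by rewrite /mulP; case: ifP; rewrite ?addr0 ?mulr0.
Qed.

Lemma mulPr_chain_ind r G (P : ('I_r * mon -> K) -> Prop) x : subspace P ->
  (forall vs g, G g -> P (chainop (@mulPr K n r) vs g)) -> gen_span (@mulPr K n r) G x -> P x.
Proof.
apply: gen_span_chain_ind => *; apply: functional_extensionality => m.
all: by rewrite /mulPr; case: ifP; rewrite ?addr0 ?mulr0.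
Qed.

Fixpoint chain_divides (vs : seq var) (m : mon) : bool :=
  if vs is v :: vs' then [&& v \in m, sorted (@leV n) m & chain_divides vs' (rem v m)]
  else true.

Fixpoint chain_quot (vs : seq var) (m : mon) : mon :=
  if vs is v :: vs' then chain_quot vs' (rem v m) else m.

Lemma chain_mulPE vs h m : chainop (@mulP K n) vs h m =
  if chain_divides vs m then h (chain_quot vs m) else 0%R.
Proof.
elim: vs m => [|v vs IH] m //=.
by rewrite /mulP IH; case: (v \in m); case: (sorted _ m).
Qed.

Lemma chain_mulPrE r vs (x : 'I_r * mon -> K) i m : chainop (@mulPr K n r) vs x (i, m) =
  if chain_divides vs m then x (i, chain_quot vs m) else 0%R.
Proof.
elim: vs m => [|v vs IH] m //=.
by rewrite /mulPr /= IH; case: (v \in m); case: (sorted _ m).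
Qed.

Lemma compo_chain_mulPr r vs (x : 'I_r * mon -> K) i :
  compo (chainop (@mulPr K n r) vs x) i = chainop (@mulP K n) vs (compo x i).
Proof. by apply: functional_extensionality => m; rewrite /compo chain_mulPrE chain_mulPE. Qed.

(* [window d w] is x_{w_1,d+1} x_{w_2,d+2} ... (the variable (i, j) is x_{i,j+1}). *)
Fixpoint window (d : nat) (w : word n) : mon :=
  if w is a :: w' then (a, d) :: window d.+1 w' else [::].

Lemma unzip1_window d w : unzip1 (window d w) = w.
Proof. by elim: w d => //= a w IH d; rewrite IH. Qed.

Lemma unzip2_window d w : unzip2 (window d w) = iota d (size w).
Proof. by elim: w d => //= a w IH d; rewrite IH. Qed.

Lemma window_rcons d w a : window d (rcons w a) = rcons (window d w) (a, d + size w).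
Proof. by elim: w d => [|b w IH] d /=; rewrite ?addn0 // IH addSnnS. Qed.

Lemma mem_window d w (e : var) :
  (e \in window d w) = (d <= e.2 < d + size w) && (nth e.1 w (e.2 - d) == e.1).
Proof.
case: e => a p /=.
elim: w d => [|b w IH] d /=; first by rewrite addn0 in_nil; case: (leqP d p).
rewrite inE IH /= -pair_eqE /=.
case: (ltngtP p d) => [Hlt|Hgt|->] /=.
- by rewrite andbF.
- by rewrite andbF /= addSnnS (_ : p - d = (p - d.+1).+1) //= subnSK.
- by rewrite andbT subnn /= orbF addnS ltnS leq_addr eq_sym.
Qed.

Lemma window_col_range d w (e : var) : e \in window d w -> d <= e.2 < d + size w.
Proof. by rewrite mem_window => /andP []. Qed.

Lemma window_sorted d w : sorted (@leV n) (window d w).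
Proof.
elim: w d => //= a w IH d; case: w IH => //= b w IH.
by rewrite IH andbT /leV /= ltnSn.
Qed.

Lemma window_uniq d w : uniq (window d w).
Proof. by have := iota_uniq d (size w); rewrite -(unzip2_window d w); apply: map_uniq. Qed.

Lemma window_col_inj d w (e e' : var) :
  e \in window d w -> e' \in window d w -> e.2 = e'.2 -> e = e'.
Proof.
rewrite !mem_window; case: e => a p; case: e' => a' p' /=.
move=> /andP [H1 /eqP H2] /andP [H3 /eqP H4] E; subst p'; congr pair.
rewrite -H2 -H4; apply: set_nth_default.
by case/andP: H1 => H5 H6; rewrite ltn_subLR.
Qed.

Lemma window_col_exists d w p : d <= p < d + size w -> exists a, (a, p) \in window d w.
Proof.
elim: w d => [|b w IH] d; first by rewrite addn0 => /andP [H1 H2]; move: (leq_ltn_trans H1 H2); rewrite ltnn.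
case/andP => H1 H2; case: (p =P d) => [->|Hne]; first by exists b; rewrite inE eqxx.
have [a Ha] : exists a, (a, p) \in window d.+1 w.
  by apply: IH; rewrite addSnnS H2 andbT ltn_neqAle H1 andbT; apply/eqP => E; apply: Hne.
by exists a; rewrite inE Ha orbT.
Qed.

Lemma chain_divides_uniq vs m : sorted (@leV n) m -> uniq m ->
  chain_divides vs m = uniq vs && all (fun v => v \in m) vs.
Proof.
elim: vs m => [|v vs IH] m Hs Hu //=.
rewrite Hs /= rem_filter // IH ?filter_uniq //; last by apply: sorted_filter => //; exact: leV_trans.
case Hv: (v \in m) => //=; last by rewrite andbF.
have -> : all (fun v0 => v0 \in [seq x <- m | predC1 v x]) vs =
          (v \notin vs) && all (fun v0 => v0 \in m) vs.
  elim: vs {IH} => //= u vs IH; rewrite mem_filter /= IH inE negb_or eq_sym.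
  by case: (v == u); case: (u \in m); case: (v \in vs); case: (all _ _).
by case: (v \notin vs); case: (uniq vs).
Qed.

Lemma chain_quot_uniq vs m : sorted (@leV n) m -> uniq m ->
  chain_quot vs m = [seq x <- m | x \notin vs].
Proof.
elim: vs m => [|v vs IH] m Hs Hu /=; first by rewrite filter_predT.
rewrite rem_filter // IH ?filter_uniq //; last by apply: sorted_filter => //; exact: leV_trans.
rewrite -filter_predI; apply: eq_filter => x /=; rewrite inE negb_or.
by case: (x == v); case: (x \in vs).
Qed.

End Monomials.
Section WindowShapes.
Variables (K : fieldType) (n : nat).
Local Notation var := (var n).
Local Notation mon := (mon n).

Lemma iter_sigmaPE k (f : mon -> K) m :
  iter k (@sigmaP K n) f m =
  if all (fun v : var => k <= v.2) m then f [seq (v.1, v.2 - k) | v <- m] else 0%R.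
Proof.
elim: k m => [|k IH] m /=.
  have -> : [seq (v.1, v.2 - 0) | v <- m] = m by elim: m => //= [[a p] m] ->; rewrite subn0.
  by rewrite all_predT.
rewrite /sigmaP IH -map_comp /comp /=.
have -> : [seq (v.1, v.2.-1 - k) | v <- m] = [seq (v.1, v.2 - k.+1) | v <- m].
  by apply: eq_map => v; congr pair; lia.
have E :  all (fun v : var => 0 < v.2) m && all (fun v : var => k <= v.2) [seq (v.1, v.2.-1) | v <- m]
        = all (fun v : var => k < v.2) m.
  by rewrite all_map -all_predI; apply: eq_all => [[a [|p]]].
by rewrite -E; case: (all _ m).
Qed.

Lemma eq_windowE k (m : mon) : (m == window k (unzip1 m)) = (unzip2 m == iota k (size m)).
Proof.
elim: m k => //= [[a p]] m IH k; rewrite !eqseq_cons IH xpair_eqE eqxx.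
by rewrite eq_sym.
Qed.

Lemma iota_shiftE k j (s : seq nat) :
  all (fun x => k <= x) s && ([seq x - k | x <- s] == iota j (size s)) = (s == iota (j + k) (size s)).
Proof.
elim: s j => //= x s IH j; rewrite !eqseq_cons -addSn -IH.
case: (leqP k x) => H /=.
  have -> : (x - k == j) = (x == j + k) by apply/eqP/eqP; lia.
  by case: (x == j + k); case: (all _ _).
have -> : (x == j + k) = false by apply/eqP; lia.
by [].
Qed.

Lemma iter_sigma_iotaPE k (f : word n -> K) m :
  iter k (@sigmaP K n) (iotaP f) m = if m == window k (unzip1 m) then f (unzip1 m) else 0%R.
Proof.
rewrite iter_sigmaPE /iotaP size_map.
have -> : unzip1 [seq (v.1, v.2 - k) | v <- m] = unzip1 m by elim: m => //= v m ->.
have -> : unzip2 [seq (v.1, v.2 - k) | v <- m] = [seq x - k | x <- unzip2 m] by elim: m => //= v m ->.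
rewrite eq_windowE.
have := iota_shiftE k 0 (unzip2 m); rewrite add0n size_map all_map /preim /= => <-.
by case: (all _ _).
Qed.

Lemma iotaRE (r : nat) (delta : 'I_r -> nat) (x : 'I_r * word n -> K) i m :
  iotaR delta x (i, m) = if m == window (delta i) (unzip1 m) then x (i, unzip1 m) else 0%R.
Proof. by rewrite /iotaR /= iter_sigma_iotaPE. Qed.

Lemma filter_window lo hi d (w : word n) :
  [seq e <- window d w | lo <= e.2 < hi] = window (maxn d lo) (take (hi - maxn d lo) (drop (lo - d) w)).
Proof.
elim: w d => [|a w IH] d /=; first by case: (lo - d); case: (hi - _).
rewrite IH; case: (ltnP d lo) => H1.
  have E1 : maxn d.+1 lo = lo by apply/maxn_idPr.
  have E2 : lo - d = (lo - d.+1).+1 by lia.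
  by rewrite E1 E2.
have E1 : maxn d.+1 lo = d.+1 by apply/maxn_idPl; exact: leqW.
have E2 : lo - d.+1 = 0 by lia.
have E3 : lo - d = 0 by lia.
rewrite E1 E2 E3 !drop0; case: (ltnP d hi) => H2.
  have E4 : hi - d = (hi - d.+1).+1 by lia.
  by rewrite E4.
have E4 : hi - d = 0 by lia.
have E5 : hi - d.+1 = 0 by lia.
rewrite E5 E4 /=; by rewrite take0.
Qed.

(* The variables [vs] sit one per column, exactly on the columns of the
   window [d, d + L) outside the gap [k, k + l). *)
Definition gap_shape (vs : seq var) (d L k l : nat) : Prop :=
  [/\ uniq vs,
     (forall v, v \in vs -> d <= v.2 < d + L /\ ~~ (k <= v.2 < k + l)),
     (forall v v', v \in vs -> v' \in vs -> v.2 = v'.2 -> v = v'),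
     (forall p, d <= p < d + L -> ~~ (k <= p < k + l) -> exists2 v, v \in vs & v.2 = p) &
     (0 < l -> d <= k /\ k + l <= d + L)].

Definition agrees (vs : seq var) d (w : word n) : Prop :=
  forall v, v \in vs -> nth v.1 w (v.2 - d) = v.1.

(* Multiplying a window starting at column [k] by the chain [vs] gives the
   window of [w] starting at column [d]. *)
Definition window_chain_ok vs d k (w : word n) : bool :=
  chain_divides vs (window d w) &&
  (chain_quot vs (window d w) == window k (unzip1 (chain_quot vs (window d w)))).

Lemma agrees_all_mem vs d L k l w : size w = L -> gap_shape vs d L k l ->
  agrees vs d w <-> all (fun v => v \in window d w) vs.
Proof.
move=> Hw [H1 H2 H3 H4 H5]; split.
  move=> HM; apply/allP => v Hv; rewrite mem_window Hw (HM v Hv) eqxx andbT.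
  by case: (H2 v Hv).
by move=> /allP HA v Hv; move: (HA v Hv); rewrite mem_window => /andP [_ /eqP].
Qed.

Lemma chain_divides_window vs d (w : word n) : uniq vs ->
  chain_divides vs (window d w) = all (fun v => v \in window d w) vs.
Proof. by move=> Hu; rewrite chain_divides_uniq ?window_sorted ?window_uniq // Hu. Qed.

Lemma chain_quot_window_gap vs d L k l w : size w = L -> gap_shape vs d L k l ->
  agrees vs d w -> chain_quot vs (window d w) = window k (take l (drop (k - d) w)).
Proof.
move=> Hw HS HM; have HMt := agrees_all_mem Hw HS; have [H1 H2 H3 H4 H5] := HS.
rewrite chain_quot_uniq ?window_sorted ?window_uniq //.
rewrite (@eq_in_filter _ _ (fun e : var => k <= e.2 < k + l)); last first.
  move=> e He; apply/idP/idP.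
    move=> Hne; apply: contraT => Hr.
    have [|v Hv Hvp] := H4 e.2 _ Hr; first by rewrite -Hw; exact: window_col_range.
    have Hvw : v \in window d w := allP (proj1 HMt HM) v Hv.
    by move: Hne; rewrite -(window_col_inj Hvw He Hvp) Hv.
  by move=> Hr; apply/negP => Hv; case: (H2 e Hv) => _; rewrite Hr.
rewrite filter_window; case: (posnP l) => Hl.
  by subst l; rewrite take0 addn0 (_ : k - maxn d k = 0) ?take0 //; lia.
have [Hdk _] := H5 Hl.
by rewrite (_ : maxn d k = k) ?addKn //; apply/maxn_idPr.
Qed.

Lemma window_chain_okP vs d L k l w : size w = L -> gap_shape vs d L k l ->
  window_chain_ok vs d k w <-> agrees vs d w.
Proof.
move=> Hw HS; have HMt := agrees_all_mem Hw HS; have [H1 _ _ _ _] := HS.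
rewrite /window_chain_ok chain_divides_window //; split=> [/andP [Hall _]|HM]; first exact/HMt.
apply/andP; split; first exact/HMt.
by rewrite (chain_quot_window_gap Hw HS HM) unzip1_window.
Qed.

Lemma window_chain_ok_shape vs d L k w : size w = L -> window_chain_ok vs d k w ->
  gap_shape vs d L k (size (chain_quot vs (window d w))) /\ agrees vs d w.
Proof.
move=> Hw /andP [Hc /eqP HR].
rewrite chain_divides_uniq ?window_sorted ?window_uniq // in Hc; case/andP: Hc => Hu /allP Hall.
have Hrm := chain_quot_uniq vs (window_sorted d w) (window_uniq d w).
set R := chain_quot vs (window d w) in HR Hrm *.
set u := unzip1 R in HR.
have Hsz : size R = size u by rewrite /u size_map.
have HinR : forall e, e \in R -> e \in window d w /\ e \notin vs.
  by move=> e; rewrite Hrm mem_filter => /andP [].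
split; last first.
  by move=> v Hv; move: (Hall v Hv); rewrite mem_window => /andP [_ /eqP].
split => //.
- move=> v Hv; have Hvw := Hall v Hv; split; first by rewrite -Hw; exact: window_col_range.
  apply/negP => Hr; rewrite Hsz in Hr.
  have [a Ha] := window_col_exists Hr; rewrite -HR in Ha.
  have [Ha1 Ha2] := HinR _ Ha.
  by rewrite (window_col_inj Ha1 Hvw erefl) Hv in Ha2.
- move=> v v' Hv Hv'; exact: window_col_inj (Hall v Hv) (Hall v' Hv').
- move=> p Hp Hr; rewrite -Hw in Hp; have [a Ha] := window_col_exists Hp.
  case Hav: ((a, p) \in vs); first by exists (a, p).
  have : (a, p) \in R by rewrite Hrm mem_filter Hav Ha.
  by rewrite HR => /window_col_range; rewrite -Hsz => Hr'; rewrite Hr' in Hr.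
- rewrite Hsz => Hl.
  have Hk1 : k <= k < k + size u by rewrite leqnn /= -{1}(addn0 k) ltn_add2l.
  have Hk2 : k <= (k + size u).-1 < k + size u by apply/andP; split; lia.
  have [a Ha] := window_col_exists Hk1.
  have [b Hb] := window_col_exists Hk2.
  rewrite -HR in Ha Hb.
  have /window_col_range := (HinR _ Ha).1; have /window_col_range := (HinR _ Hb).1; rewrite /= Hw; lia.
Qed.

Lemma gap_range_shift d L k l j : (0 < l -> d <= k /\ k + l <= d + L) -> j < L ->
  (k <= d + j < k + l) = (minn (k - d) L <= j < minn (k - d) L + l).
Proof.
move=> H Hj; case: (posnP l) => Hl.
  subst l; rewrite !addn0; case: (leqP k (d + j)) => /= H1; case: leqP => /= H2; lia.
have [H1 H2] := H Hl; apply/idP/idP => /andP [H3 H4]; apply/andP; split; lia.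
Qed.

Lemma eq_from_nth_size (T : Type) (s1 s2 : seq T) : size s1 = size s2 ->
  (forall x0 i, i < size s1 -> nth x0 s1 i = nth x0 s2 i) -> s1 = s2.
Proof.
case: s1 => [|x s1] Hs H; first by move: Hs H; case: s2.
by apply: (eq_from_nth (x0:=x)) => // i; apply: H.
Qed.

Lemma nth_outside_eqP (w w0 : word n) a b L : size w = L -> size w0 = L -> a <= b <= L ->
  (forall x0 j, j < L -> ~~ (a <= j < b) -> nth x0 w j = nth x0 w0 j) <->
  (take a w = take a w0 /\ drop b w = drop b w0).
Proof.
move=> Hw Hw0 /andP [Hab HbL]; split.
  move=> H; split.
    apply: eq_from_nth_size => [|x0 i]; first by rewrite !size_take_min Hw Hw0.
    rewrite size_take_min Hw => Hi; rewrite !nth_take; try lia.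
    by apply: H; rewrite ?negb_and -?ltnNge; lia.
  apply: eq_from_nth_size => [|x0 i]; first by rewrite !size_drop Hw Hw0.
  rewrite size_drop Hw => Hi; rewrite !nth_drop.
  by apply: H; rewrite ?negb_and -?ltnNge; lia.
move=> [Ht Hd] x0 j Hj Hr.
case: (ltnP j a) => H1.
  by rewrite -(nth_take x0 H1) Ht nth_take.
have H2 : b <= j by move: Hr; rewrite negb_and H1 /= -leqNgt.
rewrite -(subnKC H2) -!nth_drop Hd //.
Qed.

Lemma agrees_take_dropP vs d L k l (w w0 : word n) : gap_shape vs d L k l -> size w = L -> size w0 = L ->
  agrees vs d w0 ->
  (agrees vs d w <-> take (minn (k - d) L) w = take (minn (k - d) L) w0 /\
                 drop (minn (k - d) L + l) w = drop (minn (k - d) L + l) w0).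
Proof.
move=> [H1 H2 H3 H4 H5] Hw Hw0 HM0.
have Hab : minn (k - d) L <= minn (k - d) L + l <= L.
  apply/andP; split; first exact: leq_addr.
  case: (posnP l) => Hl; first by subst l; rewrite addn0 geq_minr.
  have [? ?] := H5 Hl; lia.
rewrite -(nth_outside_eqP Hw Hw0 Hab); split.
  move=> HM x0 j Hj Hr.
  have Hp : d <= d + j < d + L by rewrite leq_addr ltn_add2l.
  rewrite -(gap_range_shift H5 Hj) in Hr.
  have [v Hv Hvp] := H4 _ Hp Hr.
  have := HM v Hv; have := HM0 v Hv; rewrite Hvp addKn => E0 E.
  rewrite (set_nth_default v.1) ?Hw // E (set_nth_default v.1) ?Hw0 // E0 //.
move=> H v Hv; have [Hr1 Hr2] := H2 v Hv.
have Hj : v.2 - d < L by lia.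
transitivity (nth v.1 w0 (v.2 - d)); last exact: HM0 v Hv.
apply: H => //.
by rewrite -(gap_range_shift H5 Hj) subnKC //; case/andP: Hr1.
Qed.

End WindowShapes.

Section WordChains.
Variables (K : fieldType) (n : nat).
Local Notation var := (var n).

Definition lch (pre : word n) (g : word n -> K) := foldr (fun a g => lmulF a g) g pre.
Definition rch (suf : word n) (g : word n -> K) := foldl (fun h a => rmulF a h) g suf.

Lemma lchE pre g w : lch pre g w =
  if take (size pre) w == pre then g (drop (size pre) w) else 0%R.
Proof.
elim: pre w => [|a pre IH] w /=; first by rewrite take0 drop0 eqxx.
case: w => [|b w] //=.
by rewrite /lmulF -/(lch pre g) IH eqseq_cons; case: (b == a).
Qed.

Lemma rchE suf g w : rch suf g w =
  if (size suf <= size w) && (drop (size w - size suf) w == suf)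
  then g (take (size w - size suf) w) else 0%R.
Proof.
elim/last_ind: suf w => [|suf a IH] w /=.
  by rewrite /rch /= subn0 drop_size take_size eqxx.
rewrite /rch foldl_rcons -/(rch suf g) /rmulF.
case/lastP: w => [|w b]; first by rewrite /= size_rcons.
rewrite rev_rcons revK IH !size_rcons ltnS subSS.
case: (leqP (size suf) (size w)) => H /=; last by case: (b == a).
rewrite drop_rcons ?leq_subr // -[rcons w b]cats1 takel_cat ?leq_subr // eqseq_rcons.
by case: (b == a); rewrite ?andbF ?andbT.
Qed.

Lemma ideal_lch (I : (word n -> K) -> Prop) pre g : two_sided_ideal I -> I g -> I (lch pre g).
Proof. by move=> [_ _ _ IO] Hg; elim: pre => //= b pre IH; exact: (IO (true, b) _ IH). Qed.

Lemma ideal_rch (I : (word n -> K) -> Prop) suf g : two_sided_ideal I -> I g -> I (rch suf g).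
Proof.
move=> [_ _ _ IO] Hg; elim/last_ind: suf => // suf b IH.
by rewrite /rch foldl_rcons; exact: (IO (false, b) _ IH).
Qed.

Variables (r : nat) (delta : 'I_r -> nat).

Definition rchR (suf : word n) (x : 'I_r * word n -> K) :=
  foldl (fun y a => rmulFr a y) x suf.

Lemma compo_rchR suf x i : compo (rchR suf x) i = rch suf (compo x i).
Proof.
elim/last_ind: suf x => [|suf a IH] x //.
rewrite /rchR /rch !foldl_rcons -/(rchR suf x) -/(rch suf (compo x i)) -IH.
by apply: functional_extensionality => w; rewrite /compo /rmulFr /rmulF.
Qed.

Lemma rchRE suf x i w : rchR suf x (i, w) =
  if (size suf <= size w) && (drop (size w - size suf) w == suf)
  then x (i, take (size w - size suf) w) else 0%R.
Proof. by have := congr1 (fun f => f w) (compo_rchR suf x i); rewrite /compo /= rchE. Qed.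

Lemma lin_closed_rchR (M : ('I_r * word n -> K) -> Prop) suf y :
  lin_closed (@rmulFr K n r) M -> M y -> M (rchR suf y).
Proof.
move=> [_ _ _ MO] Hy; elim/last_ind: suf => // suf b IH.
by rewrite /rchR foldl_rcons; exact: MO.
Qed.

(* Pull back along [w |-> window d w] the product of the chain [vs] with the
   shifted copy, starting at column [k], of [f]. *)
Definition window_chain_pullback vs d L k (f : word n -> K) : word n -> K :=
  fun w => if (size w == L) && window_chain_ok vs d k w
           then f (unzip1 (chain_quot vs (window d w))) else 0%R.

Lemma take_drop_min (w : word n) k d L l : size w = L -> (0 < l -> d <= k /\ k + l <= d + L) ->
  take l (drop (k - d) w) = take l (drop (minn (k - d) L) w).
Proof.
move=> Hw H; case: (posnP l) => Hl; first by subst l; rewrite !take0.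
have [H1 H2] := H Hl; rewrite (_ : minn (k - d) L = k - d) //; lia.
Qed.

(* Once one word [w0] fits, the words that fit are exactly those agreeing with
   [w0] outside the gap: the pullback is the two-sided product w0_pre f_l w0_suf. *)
Lemma window_chain_pullback_lch_rch vs d L k f w0 :
  size w0 = L -> window_chain_ok vs d k w0 ->
  let l := size (chain_quot vs (window d w0)) in let a := minn (k - d) L in
  window_chain_pullback vs d L k f = lch (take a w0) (rch (drop (a + l) w0) (hcomp (@size 'I_n) l f)).
Proof.
move=> Hw0 Hg0 l a; have [HS HM0] := window_chain_ok_shape Hw0 Hg0.
have [_ _ _ _ H5] := HS.
have HaL : a + l <= L.
  case: (posnP l) => Hl; first by rewrite Hl addn0 geq_minr.
  have [? ?] := H5 Hl; rewrite /a; lia.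
apply: functional_extensionality => w.
rewrite /window_chain_pullback lchE rchE /hcomp !size_take_min !size_drop Hw0.
rewrite (_ : minn a L = a); last by apply/minn_idPl; lia.
case: (size w =P L) => Hw /=.
  have HG := window_chain_okP Hw HS.
  have HMi := agrees_take_dropP HS Hw Hw0 HM0; rewrite -/a in HMi.
  rewrite Hw (_ : L - a - (L - (a + l)) = l); last lia.
  rewrite (_ : (L - (a + l) <= L - a) = true) /=; last by apply/idP; lia.
  rewrite drop_drop (_ : l + a = a + l); last lia.
  rewrite (_ : minn l (L - a) = l) ?eqxx /=; last by apply/minn_idPl; lia.
  case HGw: (window_chain_ok vs d k w).
    have HMw : agrees vs d w by apply/HG.
    have [-> ->] := proj1 HMi HMw; rewrite !eqxx.
    by rewrite (chain_quot_window_gap Hw HS HMw) unzip1_window (take_drop_min Hw H5).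
  case: (take a w =P take a w0) => Ht //=; case: (drop (a + l) w =P drop (a + l) w0) => Hd //=.
  by move: HGw; rewrite (proj2 HG (proj2 HMi (conj Ht Hd))).
case: (take a w =P take a w0) => Ht //=.
have Hwa : a <= size w.
  move: (congr1 size Ht); rewrite !size_take_min Hw0 (_ : minn a L = a); last by apply/minn_idPl; lia.
  by move=> E; rewrite -E; exact: geq_minr.
case: (leqP (L - (a + l)) (size w - a)) => H1 //=.
case: (_ == _) => //=.
by case: (minn _ _ =P l) => H2 //; exfalso; apply: Hw; lia.
Qed.

Lemma ideal_window_chain_pullback (I : (word n -> K) -> Prop) vs d L k f :
  two_sided_ideal I -> graded (@size 'I_n) I -> I f -> I (window_chain_pullback vs d L k f).
Proof.
move=> HI HIg Hf.
case: (classic (exists w0, (size w0 == L) && window_chain_ok vs d k w0)) => [|Hno].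
  move=> [w0 /andP [/eqP Hw0 Hg0]]; rewrite (window_chain_pullback_lch_rch _ Hw0 Hg0).
  by apply: ideal_lch => //; apply: ideal_rch => //; apply: HIg.
have -> : window_chain_pullback vs d L k f = (fun _ => 0%R); last by case: HI.
apply: functional_extensionality => w; rewrite /window_chain_pullback.
by case: ifP => // Hc; case: Hno; exists w.
Qed.

Lemma gap_shape_shift (vs : seq var) d0 L0 l0 d : gap_shape vs d0 L0 d0 l0 ->
  d <= d0 + l0 -> l0 <= L0 -> gap_shape vs d (d0 + L0 - d) d (d0 + l0 - d).
Proof.
move=> [H1 H2 H3 H4 H5] Hd Hl; split => //.
- move=> v Hv; have [/andP [Ha Hb] Hc] := H2 v Hv.
  have Hm : d0 + l0 <= v.2 by move: Hc; rewrite Ha /= -leqNgt.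
  split; first by apply/andP; split; lia.
  by rewrite negb_and -leqNgt -ltnNge; apply/orP; right; lia.
- move=> p /andP [Ha Hb] Hc.
  have Hm : d0 + l0 <= p by move: Hc; rewrite Ha /= -leqNgt => Hc; lia.
  apply: H4; first by apply/andP; split; lia.
  by rewrite negb_and -leqNgt -ltnNge; apply/orP; right; lia.
- by move=> _; split => //; lia.
Qed.

Lemma agrees_suffixP (vs : seq var) d0 L0 l0 (w0 : word n) d (w : word n) :
  gap_shape vs d0 L0 d0 l0 -> agrees vs d0 w0 ->
  size w0 = L0 -> l0 <= L0 -> d <= d0 + l0 -> size w = d0 + L0 - d ->
  agrees vs d w <-> drop (d0 + l0 - d) w = drop l0 w0.
Proof.
move=> [H1 H2 H3 H4 H5] HM0 Hw0 Hl Hd Hw; split.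
  move=> HM; apply: eq_from_nth_size => [|x0 i]; first by rewrite !size_drop Hw Hw0; lia.
  rewrite size_drop Hw => Hi; rewrite !nth_drop.
  have Hp : d0 <= d0 + l0 + i < d0 + L0 by apply/andP; split; lia.
  have Hr : ~~ (d0 <= d0 + l0 + i < d0 + l0) by rewrite negb_and -ltnNge; apply/orP; right; lia.
  have [v Hv Hvp] := H4 _ Hp Hr.
  have E := HM v Hv; have E0 := HM0 v Hv.
  rewrite Hvp (_ : d0 + l0 + i - d = d0 + l0 - d + i) in E; last lia.
  rewrite Hvp (_ : d0 + l0 + i - d0 = l0 + i) in E0; last lia.
  have S1 : d0 + l0 - d + i < size w by lia.
  have S2 : l0 + i < size w0 by lia.
  by rewrite (set_nth_default v.1 x0 S1) E (set_nth_default v.1 x0 S2) E0.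
move=> HD v Hv; have [/andP [Ha Hb] Hc] := H2 v Hv.
have Hm : d0 + l0 <= v.2 by move: Hc; rewrite Ha /= -leqNgt.
have := congr1 (fun s => nth v.1 s (v.2 - (d0 + l0))) HD; rewrite /= !nth_drop.
rewrite (_ : d0 + l0 - d + (v.2 - (d0 + l0)) = v.2 - d); last lia.
rewrite (_ : l0 + (v.2 - (d0 + l0)) = v.2 - d0); last lia.
by move=> ->; apply: HM0.
Qed.

(* The analogue of [window_chain_pullback] for [iotaR]: each component [i] is
   read on windows starting at column [delta i]. *)
Definition window_chain_pullbackR vs d (x : 'I_r * word n -> K) : 'I_r * word n -> K :=
  fun p => if (delta p.1 + size p.2 == d) && window_chain_ok vs (delta p.1) (delta p.1) p.2
           then x (p.1, unzip1 (chain_quot vs (window (delta p.1) p.2))) else 0%R.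

(* Here the gap is a prefix, so only a right factor remains. *)
Lemma window_chain_pullbackR_rchR vs d x i0 w0 :
  delta i0 + size w0 = d -> window_chain_ok vs (delta i0) (delta i0) w0 ->
  window_chain_pullbackR vs d x =
  hcomp (degFr delta) d (rchR (drop (size (chain_quot vs (window (delta i0) w0))) w0) x).
Proof.
move=> Hd0 Hg0; set d0 := delta i0 in Hd0 Hg0 *.
have Hw0 : size w0 = d - d0 by lia.
have [HS HM0] := window_chain_ok_shape Hw0 Hg0.
set l0 := size _ in HS *.
have Hl0 : l0 <= d - d0.
  case: (posnP l0) => Hl; first by rewrite Hl.
  by have [_ _ _ _ H5] := HS; have [? ?] := H5 Hl; lia.
apply: functional_extensionality => [[i w]].
rewrite /window_chain_pullbackR /hcomp /degFr rchRE /=.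
case: (delta i + size w =P d) => Hd //=; rewrite size_drop Hw0.
case: (leqP (delta i) (d0 + l0)) => Hdi.
  have HS' := gap_shape_shift HS Hdi Hl0.
  have Hw : size w = d0 + (d - d0) - delta i by lia.
  have HG := window_chain_okP Hw HS'.
  have HMs := agrees_suffixP HS HM0 Hw0 Hl0 Hdi Hw.
  rewrite (_ : (d - d0 - l0 <= size w) = true); last by apply/idP; lia.
  rewrite (_ : size w - (d - d0 - l0) = d0 + l0 - delta i); last lia.
  case HGw: (window_chain_ok _ _ _ _).
    have HMw : agrees vs (delta i) w by apply/HG.
    rewrite (proj1 HMs HMw) eqxx /= (chain_quot_window_gap Hw HS' HMw) subnn drop0 unzip1_window.
    by congr (x (i, take _ w)); lia.
  case: (drop _ w =P _) => //= HD.
  by move: HGw; rewrite (proj2 HG (proj2 HMs HD)).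
rewrite (_ : (d - d0 - l0 <= size w) = false) /=; last by apply/negbTE; rewrite -ltnNge; lia.
case HGw: (window_chain_ok _ _ _ _) => //.
have [[_ H2' _ _ _] _] := window_chain_ok_shape (erefl (size w)) HGw.
have [_ _ _ H4 _] := HS.
case: (ltnP (d0 + l0) (d0 + (d - d0))) => Hlt; last lia.
have Hp : d0 <= d0 + l0 < d0 + (d - d0) by rewrite leq_addr.
have Hr : ~~ (d0 <= d0 + l0 < d0 + l0) by rewrite ltnn andbF.
have [v Hv Hvp] := H4 _ Hp Hr.
by have [/andP [Hv1 _] _] := H2' v Hv; lia.
Qed.

Lemma submodule_window_chain_pullbackR (I : (word n -> K) -> Prop) M vs d x :
  lifted_graded_right_submodule delta I M -> M x -> M (window_chain_pullbackR vs d x).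
Proof.
move=> [HMl _ _ Mg] Hx.
case: (classic (exists p, (delta p.1 + size p.2 == d) &&
                          window_chain_ok vs (delta p.1) (delta p.1) p.2)) => [|Hno].
  move=> [[i0 w0] /andP [/eqP Hd0 Hg0]]; rewrite (window_chain_pullbackR_rchR _ Hd0 Hg0).
  by apply: Mg; apply: lin_closed_rchR.
have -> : window_chain_pullbackR vs d x = (fun _ => 0%R); last by case: HMl.
apply: functional_extensionality => p; rewrite /window_chain_pullbackR.
by case: ifP => // Hc; case: Hno; exists p.
Qed.

End WordChains.

Section IdealJ.
Variables (K : fieldType) (n : nat).
Local Notation var := (var n).
Local Notation mon := (mon n).
Variables (I : (word n -> K) -> Prop) (HIg : graded (@size 'I_n) I).

Lemma Jt_lin_closed : lin_closed (@mulP K n) (Jt I).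
Proof. exact: gen_span_lin_closed. Qed.

Lemma Jt_chainop vs h : Jt I h -> Jt I (chainop (@mulP K n) vs h).
Proof. by have [_ _ _ HO] := Jt_lin_closed; elim: vs => //= v vs IH Hh; apply: HO; apply: IH. Qed.

Lemma hcomp_mulP0 v (x : mon -> K) : hcomp (@size var) 0 (mulP v x) = (fun _ => 0%R).
Proof.
apply: functional_extensionality => m; rewrite /hcomp /mulP.
case: (m =P [::]) => [->|Hm]; first by rewrite in_nil.
by rewrite (_ : (size m == 0) = false) //; apply/eqP => /size0nil.
Qed.

Lemma hcomp_mulP v D (x : mon -> K) :
  hcomp (@size var) D.+1 (mulP v x) = mulP v (hcomp (@size var) D x).
Proof.
apply: functional_extensionality => m; rewrite /hcomp /mulP.
case Hv: (v \in m) => //=; last by case: ifP.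
rewrite size_rem //; case: (size m =P 0) => [/size0nil E|Hs]; first by rewrite E in Hv.
have -> : (size m == D.+1) = ((size m).-1 == D) by apply/eqP/eqP; lia.
by case: (sorted _ m); case: (_ == D).
Qed.

Lemma hcomp_monoP D (q : mon) :
  hcomp (@size var) D (monoP K q) = if size q == D then monoP K q else (fun _ => 0%R).
Proof.
case: (size q =P D) => HD; apply: functional_extensionality => m; rewrite /hcomp /monoP.
  by case: (m =P q) => [->|_]; rewrite ?HD ?eqxx //; case: ifP.
by case: (m =P q) => [->|_]; [rewrite (introF eqP HD)|case: ifP].
Qed.

Lemma hcomp_sigma_iotaP D k (f : word n -> K) :
  hcomp (@size var) D (iter k (@sigmaP K n) (iotaP f)) =
  iter k (@sigmaP K n) (iotaP (hcomp (@size 'I_n) D f)).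
Proof.
apply: functional_extensionality => m; rewrite /hcomp !iter_sigma_iotaPE size_map.
by case: (m == _); case: (size m == D).
Qed.

Lemma Jt_graded : graded (@size var) (Jt I).
Proof.
move=> h D Hh; move: D; apply: (Hh (fun h => forall D, Jt I (hcomp (@size var) D h))).
  have [S0 SD SZ _] : subspace (fun h => forall D, Jt I (hcomp (@size var) D h)).
    by apply: subspace_forall => D; apply: subspace_masked; exact: subspace_lin_closed Jt_lin_closed.
  split=> // v x Hx [|D]; first by rewrite hcomp_mulP0; case: Jt_lin_closed.
  by rewrite hcomp_mulP; case: Jt_lin_closed => _ _ _; apply.
move=> g [[i [k [j ->]]]|[k [f [Hf ->]]]] D.
  rewrite hcomp_monoP; case: ifP => _; last by case: Jt_lin_closed.
  by apply: gen_span_of; left; exists i, k, j.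
rewrite hcomp_sigma_iotaP; apply: gen_span_of; right.
by exists k, (hcomp (@size 'I_n) D f); split => //; exact: HIg.
Qed.

Lemma mulP_monoP v (q : mon) : sorted (@leV n) q ->
  mulP v (monoP K q) = monoP K (sort (@leV n) (v :: q)).
Proof.
move=> Hq; apply: functional_extensionality => m; rewrite /mulP /monoP.
have B : ((v \in m) && sorted (@leV n) m) && (rem v m == q) = (m == sort (@leV n) (v :: q)).
  apply/idP/idP.
    case/andP => [/andP [Hv Hs] /eqP Hr]; apply/eqP.
    apply: (sorted_eq (@leV_trans n) (@leV_anti n)) => //; first exact: sort_sorted (@leV_total n) _.
    by rewrite perm_sym perm_sort -Hr perm_sym; apply: perm_to_rem.
  move/eqP => ->.
  have Hv : v \in sort (@leV n) (v :: q) by rewrite mem_sort inE eqxx.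
  rewrite Hv (sort_sorted (@leV_total n)) /=.
  apply/eqP; apply: (sorted_eq (@leV_trans n) (@leV_anti n)) => //.
    apply: (subseq_sorted (@leV_trans n) (rem_subseq _ _)); exact: sort_sorted (@leV_total n) _.
  rewrite -(perm_cons v); apply: (@perm_trans _ (sort (@leV n) (v :: q))).
    by rewrite perm_sym; exact: perm_to_rem Hv.
  by rewrite perm_sort.
by rewrite -B; case: (v \in m); case: (sorted _ m); case: (rem v m == q).
Qed.

Lemma chain_monoP vs (q : mon) : sorted (@leV n) q ->
  chainop (@mulP K n) vs (monoP K q) = monoP K (sort (@leV n) (vs ++ q)).
Proof.
move=> Hq; elim: vs => [|v vs IH] /=; first by rewrite sorted_sort //; exact: leV_trans.
rewrite IH mulP_monoP; last exact: sort_sorted (@leV_total n) _.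
congr (monoP K _); apply/(perm_sortP (@leV_total n) (@leV_trans n) (@leV_anti n)).
by rewrite perm_cons perm_sort.
Qed.

Lemma Jt_monoP_repeated_col (m : mon) s1 (a b : var) s2 :
  sorted (@leV n) m -> m = s1 ++ a :: b :: s2 -> a.2 = b.2 -> Jt I (monoP K m).
Proof.
move=> Hs Em Eab.
have Hq : Jt I (monoP K (sort (@leV n) [:: a; b])).
  apply: gen_span_of; left; exists a.1, b.1, a.2.
  by case: a Eab {Em} => a1 a2; case: b => b1 b2 /= ->.
have := Jt_chainop (s1 ++ s2) Hq.
rewrite chain_monoP; last exact: sort_sorted (@leV_total n) _.
suff -> : sort (@leV n) ((s1 ++ s2) ++ sort (@leV n) [:: a; b]) = m by [].
apply: (sorted_eq (@leV_trans n) (@leV_anti n)) => //; first exact: sort_sorted (@leV_total n) _.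
rewrite perm_sort Em; apply/permP => p.
rewrite !count_cat (permP (introT permPl (perm_sort _ _))) /=; lia.
Qed.

Lemma sorted_cols_or_repeated (m : mon) : sorted (@leV n) m ->
  sorted ltn (unzip2 m) \/ exists s1 a b s2, m = s1 ++ a :: b :: s2 /\ a.2 = b.2.
Proof.
elim: m => [|x m IH] /=; first by left.
case: m IH => [|y m] IH /=; first by left.
case/andP => Hxy Hs.
case: (IH Hs) => [Hl|[s1 [a [b [s2 [E Eab]]]]]]; last first.
  by right; exists (x :: s1), a, b, s2; rewrite E.
case: (x.2 =P y.2) => Exy; first by right; exists [::], x, y, m.
left; move: Hl => /= ->; rewrite andbT.
by move: Hxy; rewrite /leV => /orP [//|/andP [/eqP E _]].
Qed.

Lemma ltn_sorted_bound h t B : sorted ltn (h :: t) -> all (fun p => p < B) (h :: t) -> h + size t < B.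
Proof.
elim: t h => [|h' t IH] h /=; first by rewrite addn0 andbT.
case/andP => Hh Hs /andP [HB Hall].
have := IH h' Hs Hall; lia.
Qed.

Lemma ltn_sorted_iota (s : seq nat) d : sorted ltn s ->
  all (fun p => d <= p < d + size s) s -> s = iota d (size s).
Proof.
elim: s d => [|h t IH] d //= Hs /andP [/andP [Hdh Hh] Hall].
have Ha : all (fun p => p < d + (size t).+1) (h :: t).
  by rewrite /= Hh /=; apply/allP => p Hp; have /andP [_ ->] := allP Hall p Hp.
have Hhd : h = d by have := ltn_sorted_bound Hs Ha; lia.
subst h; congr (_ :: _).
have Hmin := order_path_min ltn_trans Hs.
rewrite (IH d.+1) ?size_iota //; first exact: path_sorted Hs.
apply/allP => p Hp; have /andP [_ H2] := allP Hall p Hp.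
by have H1 := allP Hmin p Hp; apply/andP; split; lia.
Qed.

Lemma window_or_repeated_col (m : mon) d : sorted (@leV n) m ->
  all (fun v : var => d <= v.2 < d + size m) m ->
  m = window d (unzip1 m) \/ exists s1 a b s2, m = s1 ++ a :: b :: s2 /\ a.2 = b.2.
Proof.
move=> Hs Hall; case: (sorted_cols_or_repeated Hs) => [Hl|]; last by right.
left; apply/eqP; rewrite eq_windowE; apply/eqP.
by rewrite -(size_map snd m); apply: ltn_sorted_iota => //; rewrite size_map all_map.
Qed.

End IdealJ.

Section WindowRestriction.
Variables (K : fieldType) (n : nat).
Local Notation mon := (mon n).
Variables (I : (word n -> K) -> Prop) (HI : two_sided_ideal I) (HIg : graded (@size 'I_n) I).

Definition window_restrict d L (h : mon -> K) : word n -> K :=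
  masked (fun w : word n => size w == L) (window d) h.

Lemma unzip2_chain_quot_window_uniq vs d (w : word n) :
  uniq (unzip2 (chain_quot vs (window d w))).
Proof.
rewrite chain_quot_uniq ?window_sorted ?window_uniq //.
apply: (@subseq_uniq _ _ (unzip2 (window d w))); last by rewrite unzip2_window iota_uniq.
by apply: map_subseq; apply: filter_subseq.
Qed.

(* A window never contains two variables of the same column, so the
   generators x_{ij} x_{kj} of Q restrict to zero. *)
Lemma window_restrict_Qgen vs d L g :
  Qgen g -> window_restrict d L (chainop (@mulP K n) vs g) = (fun _ => 0%R).
Proof.
move=> [i [k [j ->]]]; apply: functional_extensionality => w.
rewrite /window_restrict /masked; case: ifP => // _.
rewrite chain_mulPE; case: ifP => // _; rewrite /monoP; case: eqP => // E.
have := unzip2_chain_quot_window_uniq vs d w; rewrite E.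
have Hp : perm_eq (unzip2 (sort (@leV n) [:: (i, j); (k, j)])) [:: j; j].
  by apply: (@perm_map _ _ snd _ [:: (i, j); (k, j)]); rewrite perm_sort.
by rewrite (perm_uniq Hp) /= inE eqxx.
Qed.

Lemma window_restrict_sigma_iota vs d L k f :
  window_restrict d L (chainop (@mulP K n) vs (iter k (@sigmaP K n) (iotaP f))) =
  window_chain_pullback vs d L k f.
Proof.
apply: functional_extensionality => w.
rewrite /window_restrict /masked /window_chain_pullback chain_mulPE iter_sigma_iotaPE.
by rewrite /window_chain_ok; case: (size w == L); case: (chain_divides _ _); case: (_ == _).
Qed.

Lemma ideal_window_restrict h d L : Jt I h -> I (window_restrict d L h).
Proof.
move=> Hh; move: d L.
apply: (mulP_chain_ind (P := fun h => forall d L, I (window_restrict d L h)) _ _ Hh).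
  do 2 apply: subspace_forall => ?; apply: subspace_masked; exact: subspace_lin_closed HI.
move=> vs g [HQ|[k [f [Hf ->]]]] d L.
  by rewrite window_restrict_Qgen //; case: HI.
by rewrite window_restrict_sigma_iota; apply: ideal_window_chain_pullback.
Qed.

Variables (r : nat) (delta : 'I_r -> nat).

Definition window_part d (g : 'I_r * mon -> K) : 'I_r * word n -> K :=
  masked (fun p : 'I_r * word n => delta p.1 + size p.2 == d)
         (fun p => (p.1, window (delta p.1) p.2)) g.

Lemma compo_window_part d g i : compo (window_part d g) i =
  if delta i <= d then window_restrict (delta i) (d - delta i) (compo g i) else (fun _ => 0%R).
Proof.
apply: functional_extensionality => w; rewrite /compo /window_part /window_restrict /masked /=.
case: leqP => Hdi.
  by rewrite (_ : (delta i + size w == d) = (size w == d - delta i)) //; apply/eqP/eqP; lia.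
by rewrite (_ : (delta i + size w == d) = false) //; apply/eqP; lia.
Qed.

Lemma window_part_chain_iotaR vs d x :
  window_part d (chainop (@mulPr K n r) vs (iotaR delta x)) = window_chain_pullbackR delta vs d x.
Proof.
apply: functional_extensionality => [[i w]].
rewrite /window_part /masked /window_chain_pullbackR /= chain_mulPrE iotaRE /window_chain_ok.
by case: (_ + _ == d); case: (chain_divides _ _); case: (_ == _).
Qed.

Lemma Lspan_window_part M g (d : nat) : lifted_graded_right_submodule delta I M ->
  Lspan delta I M g -> M (window_part d g).
Proof.
move=> HM Hg; have [HMl _ Mk _] := HM; move: d.
apply: (mulPr_chain_ind (P := fun g => forall d, M (window_part d g)) _ _ Hg).
  by apply: subspace_forall => ?; apply: subspace_masked; exact: subspace_lin_closed HMl.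
move=> vs g0 [Hk|[x [Hx ->]]] d; last first.
  by rewrite window_part_chain_iotaR; apply: submodule_window_chain_pullbackR HM Hx.
apply: Mk => i; rewrite compo_window_part; case: leqP => _; last by case: HI.
by apply: ideal_window_restrict; rewrite compo_chain_mulPr; apply: Jt_chainop; apply: Hk.
Qed.

End WindowRestriction.

Section IotaR.
Variables (K : fieldType) (n r : nat) (delta : 'I_r -> nat).
Local Notation var := (var n).
Local Notation mon := (mon n).

Lemma iotaR_masked (x : 'I_r * word n -> K) :
  iotaR delta x = masked (fun p : 'I_r * mon => p.2 == window (delta p.1) (unzip1 p.2))
                         (fun p => (p.1, unzip1 p.2)) x.
Proof. by apply: functional_extensionality => [[i m]]; rewrite iotaRE. Qed.

Lemma iotaR0 : iotaR delta (fun _ : 'I_r * word n => 0%R : K) = (fun _ => 0%R).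
Proof. by rewrite iotaR_masked masked0. Qed.

Lemma iotaRD (x y : 'I_r * word n -> K) :
  iotaR delta (fun t => x t + y t)%R = (fun t => iotaR delta x t + iotaR delta y t)%R.
Proof. by rewrite !iotaR_masked maskedD. Qed.

Lemma iotaRZ c (x : 'I_r * word n -> K) :
  iotaR delta (fun t => c * x t)%R = (fun t => c * iotaR delta x t)%R.
Proof. by rewrite !iotaR_masked maskedZ. Qed.

Lemma fsupp_compo (x : 'I_r * word n -> K) : (forall i, fsupp (compo x i)) -> fsupp x.
Proof.
move=> H; have [s Hs] := functional_choice (fun i s => forall w, compo x i w != 0%R -> w \in s) H.
exists (flatten [seq [seq (i, w) | w <- s i] | i <- enum 'I_r]) => [[i w]] Hx.
apply/flattenP; exists [seq (i, w) | w <- s i]; first by apply: map_f; rewrite mem_enum.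
by apply: map_f; apply: Hs.
Qed.

Lemma rem_window_rcons d (u : word n) a : rem (a, d + size u) (window d (rcons u a)) = window d u.
Proof.
rewrite window_rcons.
have Hn : (a, d + size u) \notin window d u.
  by apply/negP => /window_col_range /=; rewrite ltnn andbF.
elim: (window d u) Hn => [|e s IH] /=; first by rewrite eqxx.
by rewrite inE negb_or => /andP [He Hs]; rewrite eq_sym (negbTE He) IH.
Qed.

Lemma window_of_rem d (a : 'I_n) (m : mon) (u : word n) :
  (a, d + size u) \in m -> sorted (@leV n) m ->
  rem (a, d + size u) m = window d u -> m = window d (rcons u a).
Proof.
move=> Hin Hs Hr.
apply: (sorted_eq (@leV_trans n) (@leV_anti n)) => //; first exact: window_sorted.
rewrite window_rcons; apply: (perm_trans (perm_to_rem Hin)); rewrite Hr.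
by rewrite perm_sym perm_rcons.
Qed.

(* iota is a morphism of right modules: right multiplication by x_a in
   degree d + 1 becomes multiplication by the variable x_{a, d+1}. *)
Lemma iotaR_rmulFr (a : 'I_n) d (x : 'I_r * word n -> K) :
  iotaR delta (hcomp (degFr delta) d.+1 (rmulFr a x)) =
  mulPr (a, d) (iotaR delta (hcomp (degFr delta) d x)).
Proof.
apply: functional_extensionality => [[i m]].
rewrite /mulPr /= !iotaRE /hcomp /degFr /=.
case: (classic (exists u, m = window (delta i) (rcons u a) /\ delta i + size u = d)) => [[u [Em Eu]]|Hno].
  have Hm1 : unzip1 m = rcons u a by rewrite Em unzip1_window.
  have Hin : (a, d) \in m by rewrite Em window_rcons mem_rcons inE Eu eqxx.
  have Hs : sorted (@leV n) m by rewrite Em window_sorted.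
  have Hr : rem (a, d) m = window (delta i) u by rewrite Em -Eu rem_window_rcons.
  rewrite Hm1 -Em eqxx size_rcons addnS Eu eqxx /rmulFr /= rev_rcons revK eqxx.
  by rewrite Hin Hs Hr unzip1_window eqxx Eu eqxx.
transitivity (0%R : K).
  case: (m =P _) => // Em; case: (_ =P d.+1) => // Es.
  rewrite /rmulFr /=; case/lastP E1: (unzip1 m) => [|u b] //=.
  rewrite rev_rcons revK; case: (b =P a) => // Eb; exfalso; apply: Hno; exists u.
  rewrite Em E1 Eb; split => //; rewrite E1 size_rcons in Es; lia.
case Hin: ((a, d) \in m) => //=; case Hs: (sorted _ m) => //=.
case: (rem (a, d) m =P _) => // Er; case: (_ =P d) => // Ed.
exfalso; apply: Hno; exists (unzip1 (rem (a, d) m)); split => //.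
by apply: window_of_rem; rewrite ?Ed //; rewrite Ed.
Qed.

Lemma iotaR_rmulFr0 (a : 'I_n) (x : 'I_r * word n -> K) :
  iotaR delta (hcomp (degFr delta) 0 (rmulFr a x)) = (fun _ => 0%R).
Proof.
apply: functional_extensionality => [[i m]]; rewrite iotaRE /hcomp /degFr /rmulFr /=.
case: (_ == _) => //; case: (_ =P 0) => // E.
by rewrite (_ : unzip1 m = [::]) //; apply/size0nil; lia.
Qed.

Lemma window_part_iotaR d (x : 'I_r * word n -> K) :
  window_part delta d (iotaR delta (hcomp (degFr delta) d x)) = hcomp (degFr delta) d x.
Proof.
apply: functional_extensionality => [[i w]].
rewrite /window_part /masked /= iotaRE unzip1_window eqxx /hcomp /degFr /=.
by case: (_ == d).
Qed.

Variables (I : (word n -> K) -> Prop) (HI : two_sided_ideal I) (HIg : graded (@size 'I_n) I).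

Lemma subspace_kerPr : subspace (kerPr I : ('I_r * mon -> K) -> Prop).
Proof.
apply: subspace_forall => i.
exact: (subspace_masked (fun _ => true) (fun m => (i, m)) (subspace_lin_closed (Jt_lin_closed I))).
Qed.

Lemma kerPr_hcomp (x : 'I_r * mon -> K) d : kerPr I x -> kerPr I (hcomp (degPr delta) d x).
Proof.
move=> Hx i; case: (leqP (delta i) d) => Hdi.
  have -> : compo (hcomp (degPr delta) d x) i = hcomp (@size var) (d - delta i) (compo x i).
    apply: functional_extensionality => m; rewrite /compo /hcomp /degPr /=.
    by rewrite (_ : (delta i + size m == d) = (size m == d - delta i)) //; apply/eqP/eqP; lia.
  exact: Jt_graded.
have -> : compo (hcomp (degPr delta) d x) i = (fun _ => 0%R); last by case: (Jt_lin_closed I).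
apply: functional_extensionality => m; rewrite /compo /hcomp /degPr /=.
by rewrite (_ : (delta i + size m == d) = false) //; apply/eqP; lia.
Qed.

Lemma kerPr_iotaR (x : 'I_r * word n -> K) d : (forall i, I (compo x i)) ->
  kerPr I (iotaR delta (hcomp (degFr delta) d x)).
Proof.
move=> Hx i; apply: gen_span_of; right; exists (delta i).
exists (if delta i <= d then hcomp (@size 'I_n) (d - delta i) (compo x i) else (fun _ => 0%R)).
split; first by case: leqP => _; [exact: HIg | case: HI].
apply: functional_extensionality => m; rewrite /compo /iotaR /=; congr (iter _ _ _ m).
congr iotaP; apply: functional_extensionality => w; rewrite /compo /hcomp /degFr /=.
case: leqP => Hdi.
  by rewrite (_ : (delta i + size w == d) = (size w == d - delta i)) //; apply/eqP/eqP; lia.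
by rewrite (_ : (delta i + size w == d) = false) //; apply/eqP; lia.
Qed.

End IotaR.

Section Descent.
Variables (K : fieldType) (n r : nat) (delta : 'I_r -> nat).
Variables (I : (word n -> K) -> Prop) (HI : two_sided_ideal I) (HIg : graded (@size 'I_n) I).
Variables (HIf : forall f, I f -> fsupp f).
Variables (M' : ('I_r * mon n -> K) -> Prop) (HM' : lifted_graded_S_submodule delta I M').

Definition iota_preimage (x : 'I_r * word n -> K) : Prop :=
  fsupp x /\ forall d, M' (iotaR delta (hcomp (degFr delta) d x)).

Lemma fsupp_rmulFr a (x : 'I_r * word n -> K) : fsupp x -> fsupp (rmulFr a x).
Proof.
move=> [s Hs]; exists [seq (p.1, rcons p.2 a) | p <- s] => [[i w]].
rewrite /rmulFr /=; case/lastP: w => [|w b] //=; first by rewrite eqxx.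
rewrite rev_rcons revK; case: (b =P a) => [->|_]; last by rewrite eqxx.
by move=> /Hs H; apply/mapP; exists (i, w).
Qed.

Lemma iota_preimage_submodule : lifted_graded_right_submodule delta I iota_preimage.
Proof.
have [[M0 MD MZ MO] _ Mker _] := HM'; have [F0 FD FZ _] : subspace (@fsupp K ('I_r * word n)%type) := subspace_fsupp K _.
split; first split.
- by split => // d; rewrite hcomp0 iotaR0.
- by move=> x y [Hx1 Hx2] [Hy1 Hy2]; split=> [|d]; [exact: FD|rewrite hcompD iotaRD; exact: MD].
- by move=> c x [Hx1 Hx2]; split=> [|d]; [exact: FZ|rewrite hcompZ iotaRZ; exact: MZ].
- move=> a x [Hx1 Hx2]; split=> [|[|d]]; first exact: fsupp_rmulFr.
    by rewrite iotaR_rmulFr0.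
  by rewrite iotaR_rmulFr; apply: MO.
- by move=> x [].
- move=> x Hx; split; first by apply: fsupp_compo => i; apply: HIf.
  by move=> d; apply: Mker; apply: kerPr_iotaR.
- move=> x d [Hx1 Hx2]; split=> [|e]; first exact: fsupp_hcomp.
  by rewrite hcomp_hcomp; case: (e == d); rewrite ?iotaR0.
Qed.

Lemma M'_iotaR x : iota_preimage x -> M' (iotaR delta x).
Proof.
have [[M0 MD MZ _] _ _ _] := HM'; move=> [Hx1 Hx2]; apply: (subspace_of_hcomps (S := fun x => M' (iotaR delta x)) _ Hx1 Hx2).
split=> [|a b Ha Hb|c a Ha|[]]; rewrite ?iotaR0 ?iotaRD ?iotaRZ //; [exact: MD | exact: MZ].
Qed.

Lemma Lspan_iota_preimage x : Lspan delta I iota_preimage x -> M' x.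
Proof.
have [HM'l _ Mker _] := HM'; apply=> // g [/Mker //|[x0 [Hx0 ->]]]; exact: M'_iotaR.
Qed.

Lemma fsupp_window_part d (h : 'I_r * mon n -> K) : fsupp h -> fsupp (window_part delta d h).
Proof.
move=> [s Hs]; exists [seq (p.1, unzip1 p.2) | p <- s] => [[i w]].
rewrite /window_part /masked /=; case: ifP => _; last by rewrite eqxx.
by move=> /Hs Hin; apply/mapP; exists (i, window (delta i) w); rewrite //= unzip1_window.
Qed.

Lemma hcomp_window_part d e (h : 'I_r * mon n -> K) :
  hcomp (degFr delta) e (window_part delta d h) =
  if e == d then window_part delta d h else (fun _ => 0%R).
Proof.
case: (e =P d) => [->|Hne]; apply: functional_extensionality => [[i w]];
  rewrite /hcomp /window_part /masked /degFr /=.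
  by case: (_ == d).
by case: (_ =P e) => [E|//]; case: (_ =P d) => // E'; case: Hne; rewrite -E -E'.
Qed.

(* A homogeneous element supported on the subalgebras S(delta_i, d) differs
   from the image of its window part by monomials with a repeated column. *)
Lemma kerPr_window_residue d y : polyPr y -> in_subalg_r delta d y ->
  let h := hcomp (degPr delta) d y in
  kerPr I (fun p => h p - iotaR delta (window_part delta d h) p)%R.
Proof.
move=> [[s Hs] Hys] Hsub h i.
have -> : compo (fun p => h p - iotaR delta (window_part delta d h) p)%R i =
          (fun m => if m == window (delta i) (unzip1 m) then 0%R else h (i, m)).
  apply: functional_extensionality => m; rewrite /compo iotaRE /window_part /masked /= size_map.
  case: (m =P _) => [<-|_]; last by rewrite subr0.
  by rewrite /h /hcomp /degPr /=; case: ifP; rewrite subrr.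
apply: (subspace_of_monomials (subspace_lin_closed (Jt_lin_closed I))) => [|m].
  exists [seq p.2 | p <- s] => m; case: ifP => _; first by rewrite eqxx.
  rewrite /h /hcomp; case: ifP => _; last by rewrite eqxx.
  by move=> /Hs Hin; apply/mapP; exists (i, m).
case: (m =P _) => [_|Hnw]; first by rewrite eqxx.
rewrite /h /hcomp /degPr /=; case: (_ =P d) => [Hd Hy|_]; last by rewrite eqxx.
have Hall : all (fun v : var n => delta i <= v.2 < delta i + size m) m by rewrite Hd; exact: Hsub Hy.
case: (window_or_repeated_col (Hys _ Hy) Hall) => [E|[s1 [a [b [s2 [Em Eab]]]]]]; first by case: Hnw.
exact: Jt_monoP_repeated_col (Hys _ Hy) Em Eab.
Qed.

Lemma Mgen_Lspan d g : Mgen delta I M' d g -> Lspan delta I iota_preimage g.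
Proof.
have [[M0 MD MZ _] _ Mker _] := HM'; have [K0 KD KZ _] := subspace_kerPr r I.
case=> [Hg [y [Hy Hsub Hker]] Hhom]; set h := hcomp (degPr delta) d y.
set z := window_part delta d h.
have Hk2 : kerPr I (fun p => h p - iotaR delta z p)%R := kerPr_window_residue Hy Hsub.
have Hk1 : kerPr I (fun p => g p - h p)%R.
  have -> : (fun p => g p - h p)%R =
            (fun p => (g p - hcomp (degPr delta) d g p) + hcomp (degPr delta) d (fun p => g p - y p) p)%R.
    by apply: functional_extensionality => p; rewrite /h /hcomp; case: ifP => _; ring.
  by apply: KD => //; apply: kerPr_hcomp.
have Hz : M' (iotaR delta z).
  have -> : iotaR delta z = (fun p => g p + (-1) * (g p - h p) + (-1) * (h p - iotaR delta z p))%R.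
    by apply: functional_extensionality => p; ring.
  by apply: (MD); [apply: (MD) => //|]; apply: (MZ); apply: Mker.
have Hpre : iota_preimage z.
  split=> [|e]; first by apply: fsupp_window_part; apply: fsupp_hcomp; case: Hy.
  by rewrite hcomp_window_part; case: (e == d); rewrite ?iotaR0.
have -> : g = (fun p => (g p - h p) + (h p - iotaR delta z p) + iotaR delta z p)%R.
  by apply: functional_extensionality => p; ring.
have [_ LD _ _] := gen_span_lin_closed (@mulPr K n r)
  (fun g => kerPr I g \/ exists x, iota_preimage x /\ g = iotaR delta x).
apply: (LD); first apply: (LD); apply: gen_span_of; [left|left|right] => //.
by exists z.
Qed.

Lemma iota_preimage_unique M : lifted_graded_right_submodule delta I M ->
  (forall x, M' x <-> Lspan delta I M x) -> forall x, M x <-> iota_preimage x.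
Proof.
move=> HM HL x; have [[N0 ND NZ _] Mf _ Mg] := HM; split.
  move=> Hx; split=> [|d]; first exact: Mf.
  by apply/HL; apply: gen_span_of; right; exists (hcomp (degFr delta) d x); split => //; exact: Mg.
move=> [Hx1 Hx2]; apply: (subspace_of_hcomps (S := M) (deg := degFr delta) _ Hx1) => [|d]; first by split.
by rewrite -(window_part_iotaR delta d x); apply: (Lspan_window_part HI HIg _ HM); apply/HL.
Qed.

End Descent.

Unset Implicit Arguments. Set Strict Implicit. Set Printing Implicit Defensive.

Theorem mainTheorem9 (K : fieldType) (n r : nat) (delta : 'I_r -> nat)
  (I : (word n -> K) -> Prop)
  (HI : two_sided_ideal I) (HIg : graded (@size 'I_n) I)
  (HIf : forall f, I f -> fsupp f)
  (M' : ('I_r * mon n -> K) -> Prop)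
  (HM' : lifted_graded_S_submodule delta I M')
  (Hgen : forall x, M' x <->
     gen_span (@mulPr K n r) (fun g => kerPr I g \/ exists d, Mgen delta I M' d g) x) :
  exists M : ('I_r * word n -> K) -> Prop,
    [/\ lifted_graded_right_submodule delta I M,
        (forall x, M' x <-> Lspan delta I M x) &
        (forall M2, lifted_graded_right_submodule delta I M2 ->
           (forall x, M' x <-> Lspan delta I M2 x) -> forall x, M2 x <-> M x)].
Proof.
exists (iota_preimage delta M'); split.
- exact: (iota_preimage_submodule HI HIg HIf HM').
- move=> x; split=> [/Hgen Hx|]; last exact: (Lspan_iota_preimage HM').
  apply: (gen_span_sub _ Hx) => g [Hk|[d Hd]]; first by apply: gen_span_of; left.
  exact: (Mgen_Lspan HIg HM' Hd).
- by move=> M2 HM2 HL; apply: (iota_preimage_unique HI HIg HM2 HL).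
Qed.
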